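(* Let $A$ be a $\{0,1\}$-matrix and let $\mathcal{C}=\{\omega(1),\dots,\omega(M)\}\subset B_*(X_A)$ be a prefix code, $\Sigma_{A(\mathcal{C})}=\{1,\dots,M\}$. The following are equivalent: (1) for any $\gamma\in B_*(X_A)$ there exists $\eta\in B_*(X_A)$ with $\gamma\eta\in B_*(X_A)$ and there exists a unique finite sequence $(i_1,\dots,i_k)\in(\Sigma_{A(\mathcal{C})})^k$ with $\gamma\eta=\omega(i_1)\omega(i_2)\cdots\omega(i_k)$; (2) for any $x=(x_n)_{n\in\mathbb{N}}\in X_A$ there exist a unique increasing sequence $1<k_1<k_2<\cdots$ of positive integers and $i_1,i_2,\dots\in\Sigma_{A(\mathcal{C})}$ such that $x_{[1,k_1)}=\omega(i_1)$ and $x_{[k_n,k_{n+1})}=\omega(i_{n+1})$ for all $n\ge1$, i.e. $x$ has a unique factorization $x=\omega(i_1)\omega(i_2)\cdots$.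
   Context: For an $N\times N$ matrix $A$ with entries in $\{0,1\}$, $\Sigma_A=\{1,\dots,N\}$ and $X_A$ is the set of sequences $(x_n)_{n\in\mathbb{N}}$ in $\Sigma_A$ with $A(x_n,x_{n+1})=1$ for all $n$, with product topology. $B_k(X_A)$ is the set of admissible words of length $k$ (those occurring in elements of $X_A$), and $B_*(X_A)=\bigcup_{k\ge0}B_k(X_A)$ including the empty word. $x_{[a,b)}$ denotes the word $x_ax_{a+1}\cdots x_{b-1}$. A code is a nonempty $\mathcal{C}\subset B_*(X_A)$ such that any equality $\omega(i_1)\cdots\omega(i_k)=\omega(j_1)\cdots\omega(j_n)$ of concatenations of words of $\mathcal{C}$ forces $n=k$ and $\omega(i_m)=\omega(j_m)$ for all $m$; a prefix code is a code in which no word is a prefix of another. *)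

(* Alphabet {1..N} is rendered as 'I_N (0-based). *)
From mathcomp Require Import all_boot all_algebra.
Set Implicit Arguments. Unset Strict Implicit. Unset Printing Implicit Defensive.

Section Shift.
Variable N : nat.
Variable A : 'M[bool]_N.

(* X_A : one-sided sequences indexed by nat (0-based) with allowed transitions *)
Definition in_XA (x : nat -> 'I_N) : Prop := forall n, A (x n) (x n.+1).

Definition word (x : nat -> 'I_N) (a b : nat) : seq 'I_N :=
  [seq x j | j <- iota a (b - a)].

Definition admissible (w : seq 'I_N) : Prop :=
  w = [::] \/ exists x, in_XA x /\ exists a, w = word x a (a + size w).

Definition is_code (C : pred (seq 'I_N)) : Prop :=
  (exists w, C w) /\ (forall w, C w -> admissible w) /\
  (forall s t : seq (seq 'I_N), all C s -> all C t ->
      flatten s = flatten t -> size s = size t /\ s = t).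

Definition is_prefix_code (C : pred (seq 'I_N)) : Prop :=
  is_code C /\ forall u v, C u -> C v -> u <> v -> ~~ prefix u v.

Definition concat_code (M : nat) (omega : 'I_M -> seq 'I_N) (s : seq 'I_M) :=
  flatten (map omega s).

(* x = omega(i_0) omega(i_1) ... with cut points 0 < k_0 < k_1 < ... *)
Definition factorizes (M : nat) (omega : 'I_M -> seq 'I_N) (x : nat -> 'I_N)
  (k : nat -> nat) (i : nat -> 'I_M) : Prop :=
  0 < k 0 /\ (forall n, k n < k n.+1) /\
  word x 0 (k 0) = omega (i 0) /\
  (forall n, word x (k n) (k n.+1) = omega (i n.+1)).

End Shift.

(* (2) -> (1): an admissible word gamma is the beginning of some point y of
   X_A; reading y up to the first cut of its factorization beyond |gamma|
   completes gamma to a concatenation of codewords, unique because C is a code.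
   (1) -> (2): by (1) every finite prefix of x is a prefix of a concatenation
   of codewords.  Reading such a concatenation longer than the longest codeword,
   its first codeword occurs at the start of x, and the prefix property makes
   that codeword independent of the concatenation; the remaining suffix of x is
   again extendable, so greedy parsing produces a factorization.  The prefix
   property also forces any two factorizations to agree cut by cut. *)
From mathcomp Require Import all_boot all_algebra.
From mathcomp Require Import zify.
Set Implicit Arguments. Unset Strict Implicit.

Section Words.
Variables (N : nat) (x : nat -> 'I_N).

Lemma size_word a b : size (word x a b) = b - a.
Proof. by rewrite /word size_map size_iota. Qed.

Lemma word_cat a b c : a <= b -> b <= c -> word x a c = word x a b ++ word x b c.
Proof.
move=> hab hbc; rewrite /word.
have -> : c - a = (b - a) + (c - b) by lia.
by rewrite iotaD map_cat subnKC.
Qed.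

Lemma word_shift a m : word (fun n => x (a + n)) 0 m = word x a (a + m).
Proof.
rewrite /word subn0 addKn.
by rewrite -[in RHS](addn0 a) iotaDl -map_comp.
Qed.

End Words.

Lemma in_XA_shift N (A : 'M[bool]_N) x a :
  in_XA A x -> in_XA A (fun n => x (a + n)).
Proof. by move=> hx n; rewrite addnS. Qed.

Lemma admissible_word N (A : 'M[bool]_N) x b c :
  in_XA A x -> b <= c -> admissible A (word x b c).
Proof.
move=> hx hbc; right; exists x; split => //; exists b.
by rewrite size_word subnKC.
Qed.

Section PrefixCode.
Variables (N M : nat) (A : 'M[bool]_N) (omega : 'I_M -> seq 'I_N).
Hypothesis omega_inj : injective omega.
Hypothesis Hcode : is_prefix_code A (fun w => w \in codom omega).

Lemma size_codeword_gt0 j : 0 < size (omega j).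
Proof.
case: Hcode => [[_ [_ unique_fact]] _].
case E: (omega j) => [|a l] //.
have := unique_fact [:: omega j] [::]; rewrite /= codom_f E.
by case/(_ isT isT erefl).
Qed.

Lemma concat_code_inj : injective (concat_code omega).
Proof.
case: Hcode => [[_ [_ unique_fact]] _] s t E.
have all_codom u : all (fun w => w \in codom omega) (map omega u).
  by apply/allP => w /mapP [j _ ->]; rewrite codom_f.
have [_ ] := unique_fact _ _ (all_codom s) (all_codom t) E.
exact: inj_map.
Qed.

Lemma codeword_at_unique x p q q' a b :
  word x p q = omega a -> word x p q' = omega b -> a = b /\ q = q'.
Proof.
wlog le_qq' : q q' a b / q <= q'.
  move=> W h h'; case: (leqP q q') => [le|/ltnW lt]; first exact: W h h'.
  by have [-> ->] := W _ _ _ _ lt h' h.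
move=> h h'.
have lt_pq : p < q by have := size_codeword_gt0 a; rewrite -h size_word; lia.
have pre : prefix (omega a) (omega b).
  by rewrite -h -h' (word_cat x (ltnW lt_pq) le_qq') prefix_prefix.
have eq_ab : omega a = omega b.
  case: Hcode => _ no_prefix; apply/eqP/negPn/negP => /eqP ne_ab.
  by move: (no_prefix _ _ (codom_f _ _) (codom_f _ _) ne_ab); rewrite pre.
split; first exact: omega_inj.
by move: (congr1 size h) (congr1 size h'); rewrite eq_ab !size_word; lia.
Qed.

Section Parsing.
Variable x : nat -> 'I_N.

Lemma factorizes_unique k i k' i' :
  factorizes omega x k i -> factorizes omega x k' i' ->
  forall n, k' n = k n /\ i' n = i n.
Proof.
move=> [_ [_ [w0 wS]]] [_ [_ [w0' wS']]].
elim=> [|n [IHk _]]; first by have [-> ->] := codeword_at_unique w0' w0.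
have := wS' n; rewrite IHk => h.
by have [-> ->] := codeword_at_unique h (wS n).
Qed.

Definition parsable p :=
  forall m, exists s, prefix (word x p (p + m)) (concat_code omega s).

Lemma prefix_concat_cons p m j s : size (omega j) <= m ->
  prefix (word x p (p + m)) (concat_code omega (j :: s)) ->
  word x p (p + size (omega j)) = omega j /\
  prefix (word x (p + size (omega j)) (p + m)) (concat_code omega s).
Proof.
move=> hm /prefixP [t].
rewrite /concat_code /= (@word_cat _ x p (p + size (omega j)) (p + m)); [|lia|lia].
rewrite -catA => /eqP; rewrite eqseq_cat ?size_word ?addKn //.
by case/andP => /eqP/esym eq_j /eqP ->; rewrite prefix_prefix.
Qed.

Lemma parsable_step p : parsable p ->
  exists j, word x p (p + size (omega j)) = omega j /\
            parsable (p + size (omega j)).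
Proof.
move=> hp; pose L := \max_(j : 'I_M) size (omega j).
have le_L j : size (omega j) <= L by apply: leq_bigmax.
have first_codeword m : exists j s,
    word x p (p + size (omega j)) = omega j /\
    prefix (word x (p + size (omega j)) (p + (L + m.+1))) (concat_code omega s).
  have [[|j s] hs] := hp (L + m.+1).
    by move/size_prefix: hs; rewrite size_word addKn addnS ltn0.
  exists j, s; apply: prefix_concat_cons hs.
  exact: leq_trans (le_L j) (leq_addr _ _).
have [j [_ [hj _]]] := first_codeword 0.
exists j; split => // m.
have [j' [s [hj' hs]]] := first_codeword m.
have [eq_j' _] := codeword_at_unique hj' hj; subst j'.
exists s; apply: prefix_trans hs.
have le_j := le_L j.
rewrite (@word_cat _ x _ (p + size (omega j) + m) (p + (L + m.+1))); [|lia|lia].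
exact: prefix_prefix.
Qed.

(* [j0] is only a default: at a parsable position some codeword is found. *)
Definition next_codeword (j0 : 'I_M) p :=
  odflt j0 [pick j | word x p (p + size (omega j)) == omega j].

Definition greedy_cut j0 n :=
  iter n (fun p => p + size (omega (next_codeword j0 p))) 0.

Lemma next_codewordP j0 p : parsable p ->
  word x p (p + size (omega (next_codeword j0 p))) = omega (next_codeword j0 p) /\
  parsable (p + size (omega (next_codeword j0 p))).
Proof.
case/parsable_step => j [hj hpj]; rewrite /next_codeword.
case: pickP => [j' /eqP hj'|/(_ j)]; last by rewrite hj eqxx.
by have [-> _] := codeword_at_unique hj' hj.
Qed.

Lemma parsable_greedy_cut j0 n : parsable 0 -> parsable (greedy_cut j0 n).
Proof. by move=> h0; elim: n => // n /(next_codewordP j0) []. Qed.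

Lemma greedy_factorizes j0 : parsable 0 ->
  factorizes omega x (fun n => greedy_cut j0 n.+1)
                     (fun n => next_codeword j0 (greedy_cut j0 n)).
Proof.
move=> h0; have step n := (next_codewordP j0 (parsable_greedy_cut j0 n h0)).1.
split; first exact: size_codeword_gt0.
split; first by move=> n /=; rewrite -addn1 leq_add2l size_codeword_gt0.
by split=> [|n]; [exact: step 0 | exact: step n.+1].
Qed.

End Parsing.

Lemma factorizes_cut_gt x k i n : factorizes omega x k i -> n < k n.
Proof. by case=> k0 [k_incr _]; elim: n => // n IH; apply: leq_ltn_trans IH _. Qed.

Lemma word_factorization x k i n : factorizes omega x k i ->
  word x 0 (k n) = concat_code omega (map i (iota 0 n.+1)).
Proof.
case=> _ [k_incr [w0 wS]]; elim: n => [|n IH]; first by rewrite w0 /concat_code /= cats0.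
rewrite (word_cat x (leq0n _) (ltnW (k_incr n))) IH wS.
by rewrite -[n.+2]addn1 iotaD map_cat /concat_code map_cat flatten_cat /= cats0.
Qed.

Lemma completion_of_factorization y k i g :
  in_XA A y -> factorizes omega y k i ->
  exists eta, admissible A eta /\ admissible A (word y 0 g ++ eta) /\
    exists! s, word y 0 g ++ eta = concat_code omega s.
Proof.
move=> hy fy; have le_gk := ltnW (factorizes_cut_gt g fy).
exists (word y g (k g)); rewrite -(word_cat y (leq0n g) le_gk).
split; first exact: admissible_word.
split; first exact: admissible_word.
exists (map i (iota 0 g.+1)); split; first exact: word_factorization.
by move=> s; rewrite (word_factorization _ fy) => /concat_code_inj.
Qed.

End PrefixCode.

Theorem mainTheorem4 (N : nat) (A : 'M[bool]_N) (M : nat)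
  (omega : 'I_M -> seq 'I_N)
  (omega_inj : injective omega)
  (Hcode : is_prefix_code A (fun w => w \in codom omega)) :
  (forall gamma, admissible A gamma ->
     exists eta, admissible A eta /\ admissible A (gamma ++ eta) /\
       exists! s : seq 'I_M, gamma ++ eta = concat_code omega s)
  <->
  (forall x, in_XA A x ->
     exists k i, factorizes omega x k i /\
       forall k' i', factorizes omega x k' i' ->
         forall n, k' n = k n /\ i' n = i n).
Proof.
split=> [completable x hx | factorizable gamma].
- have h0 : parsable omega x 0.
    move=> m; have [|eta [_ [_ [s [hs _]]]]] := completable (word x 0 (0 + m)).
      exact: admissible_word.
    by exists s; rewrite -hs prefix_prefix.
  have [j0 _] := parsable_step omega_inj Hcode h0.
  have greedy := greedy_factorizes omega_inj Hcode j0 h0.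
  exists (fun n => greedy_cut omega x j0 n.+1).
  exists (fun n => next_codeword omega x j0 (greedy_cut omega x j0 n)).
  by split=> // k' i' /(factorizes_unique omega_inj Hcode greedy).
- case=> [->|[x [hx [a ->]]]].
    exists [::]; split; first by left.
    split; first by left.
    by exists [::]; split=> // s; apply: (concat_code_inj omega_inj Hcode (x1 := [::])).
  have hy := in_XA_shift a hx.
  have [k [i [fy _]]] := factorizable _ hy.
  rewrite -word_shift.
  exact: (completion_of_factorization omega_inj Hcode (size gamma) hy fy).
Qed.
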